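(* Let $\mathcal{F}$ be a family of irreducible and reversible finite Markov chains. (1) Continuous time, $\mathcal{F}=(\mu_n,\mathcal{S}_n,L_n,\pi_n)_{n\ge1}$: if $\liminf_n\pi_n(|\mu_n/\pi_n|^2)>1$, then $\mathcal{F}$ has an $L^2$-cutoff if and only if it has an $L^2$-pre-cutoff. (2) Discrete time, $\mathcal{F}=(\mu_n,\mathcal{S}_n,K_n,\pi_n)_{n\ge1}$: if $\liminf_n\pi_n(|\mu_nK_n/\pi_n|^2)>1$ and $T_{n,2}(\mu_n,\epsilon_0)\to\infty$ for some $\epsilon_0\in(0,\infty)$, then $\mathcal{F}$ has an $L^2$-cutoff if and only if it has an $L^2$-pre-cutoff.
   Context: For a finite irreducible Markov chain on $\mathcal{S}$ with stationary distribution $\pi$ and initial distribution $\mu$: in discrete time with transition matrix $K$, $d_2(\mu,m)=\big(\sum_y|\mu K^m(y)/\pi(y)-1|^2\pi(y)\big)^{1/2}$ for integers $m\ge0$; in continuous time with generator $L$ and $H_t=e^{tL}$, $d_2(\mu,t)=\big(\sum_y|\mu H_t(y)/\pi(y)-1|^2\pi(y)\big)^{1/2}$, $t\ge0$. Here $\pi(|f|^2)=\sum_y|f(y)|^2\pi(y)$ and $(\mu/\pi)(y)=\mu(y)/\pi(y)$. The $L^2$-mixing time is $T_2(\mu,\epsilon)=\min\{t\ge0:d_2(\mu,t)\le\epsilon\}$ ($t$ integer in discrete time). $d_{n,2},T_{n,2}$ denote these for the $n$th chain. $L^2$-cutoff (discrete time): there is $t_n>0$ with $d_{n,2}(\mu_n,\lceil(1+a)t_n\rceil)\to0$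 and $d_{n,2}(\mu_n,\lfloor(1-a)t_n\rfloor)\to\infty$ for all $a\in(0,1)$. $L^2$-pre-cutoff (discrete time): there are $t_n>0$ and $0<A<B$ with $\limsup_n d_{n,2}(\mu_n,\lceil Bt_n\rceil)=0$ and $\liminf_n d_{n,2}(\mu_n,\lfloor At_n\rfloor)>0$. In continuous time both definitions are the same with $\lceil\cdot\rceil,\lfloor\cdot\rfloor$ removed. *)

From Stdlib Require Import Reals Relations ClassicalEpsilon Factorial.
Open Scope R_scope.

(* States of the n-th chain: 0 .. N-1 (as nat); matrices/vectors are functions on nat,
   only entries below N matter. *)

Fixpoint fsum (N : nat) (f : nat -> R) : R :=
  match N with O => 0 | S k => fsum k f + f k end.

Definition matmul (N : nat) (A B : nat -> nat -> R) : nat -> nat -> R :=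
  fun x y => fsum N (fun z => A x z * B z y).

Definition matid : nat -> nat -> R := fun x y => if Nat.eqb x y then 1 else 0.

Fixpoint matpow (N : nat) (A : nat -> nat -> R) (m : nat) : nat -> nat -> R :=
  match m with O => matid | S k => matmul N (matpow N A k) A end.

Definition vecmat (N : nat) (mu : nat -> R) (A : nat -> nat -> R) : nat -> R :=
  fun y => fsum N (fun x => mu x * A x y).

(* Heat semigroup H_t = e^{tL}, entrywise the sum of the (convergent) series
   sum_k t^k L^k / k!. *)
Definition heat (N : nat) (L : nat -> nat -> R) (t : R) : nat -> nat -> R :=
  fun x y => epsilon (inhabits 0)
    (fun l => Un_cv (fun K => sum_f_R0 (fun k => t ^ k / INR (Factorial.fact k) * matpow N L k x y) K) l).

Definition is_prob (N : nat) (p : nat -> R) : Prop :=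
  (forall x, (x < N)%nat -> 0 <= p x) /\ fsum N p = 1.

Definition is_kernel (N : nat) (K : nat -> nat -> R) : Prop :=
  forall x, (x < N)%nat -> (forall y, (y < N)%nat -> 0 <= K x y) /\ fsum N (K x) = 1.

Definition is_generator (N : nat) (L : nat -> nat -> R) : Prop :=
  forall x, (x < N)%nat ->
    (forall y, (y < N)%nat -> x <> y -> 0 <= L x y) /\ fsum N (L x) = 0.

Definition irreducible (N : nat) (A : nat -> nat -> R) : Prop :=
  (0 < N)%nat /\
  forall x y, (x < N)%nat -> (y < N)%nat ->
    clos_refl_trans nat (fun u v => (u < N)%nat /\ (v < N)%nat /\ u <> v /\ 0 < A u v) x y.

Definition stationary_kernel (N : nat) (K : nat -> nat -> R) (pi : nat -> R) : Prop :=
  is_prob N pi /\ forall y, (y < N)%nat -> vecmat N pi K y = pi y.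

Definition stationary_generator (N : nat) (L : nat -> nat -> R) (pi : nat -> R) : Prop :=
  is_prob N pi /\ forall y, (y < N)%nat -> vecmat N pi L y = 0.

Definition reversible (N : nat) (A : nat -> nat -> R) (pi : nat -> R) : Prop :=
  forall x y, (x < N)%nat -> (y < N)%nat -> pi x * A x y = pi y * A y x.

Definition l2norm2 (N : nat) (nu pi : nat -> R) : R :=
  fsum N (fun y => (nu y / pi y) ^ 2 * pi y).

Definition l2dist (N : nat) (nu pi : nat -> R) : R :=
  sqrt (fsum N (fun y => (nu y / pi y - 1) ^ 2 * pi y)).

Definition d2_disc (N : nat) (K : nat -> nat -> R) (pi mu : nat -> R) (m : nat) : R :=
  l2dist N (vecmat N mu (matpow N K m)) pi.

Definition d2_cont (N : nat) (L : nat -> nat -> R) (pi mu : nat -> R) (t : R) : R :=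
  l2dist N (vecmat N mu (heat N L t)) pi.

Definition nfloor (x : R) : nat := Z.to_nat (Int_part x).
Definition nceil (x : R) : nat := Z.to_nat (- Int_part (- x)).

(* "liminf_n u n > c" *)
Definition liminf_gt (u : nat -> R) (c : R) : Prop :=
  exists c', c < c' /\ exists n0, forall n, (n0 <= n)%nat -> c' <= u n.

Definition cutoff_cont (d : nat -> R -> R) : Prop :=
  exists tn : nat -> R, (forall n, 0 < tn n) /\
    forall a, 0 < a < 1 ->
      Un_cv (fun n => d n ((1 + a) * tn n)) 0 /\
      cv_infty (fun n => d n ((1 - a) * tn n)).

Definition precutoff_cont (d : nat -> R -> R) : Prop :=
  exists (tn : nat -> R) (A B : R), (forall n, 0 < tn n) /\ 0 < A /\ A < B /\
    Un_cv (fun n => d n (B * tn n)) 0 /\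
    liminf_gt (fun n => d n (A * tn n)) 0.

Definition cutoff_disc (d : nat -> nat -> R) : Prop :=
  exists tn : nat -> R, (forall n, 0 < tn n) /\
    forall a, 0 < a < 1 ->
      Un_cv (fun n => d n (nceil ((1 + a) * tn n))) 0 /\
      cv_infty (fun n => d n (nfloor ((1 - a) * tn n))).

Definition precutoff_disc (d : nat -> nat -> R) : Prop :=
  exists (tn : nat -> R) (A B : R), (forall n, 0 < tn n) /\ 0 < A /\ A < B /\
    Un_cv (fun n => d n (nceil (B * tn n))) 0 /\
    liminf_gt (fun n => d n (nfloor (A * tn n))) 0.

(* T_2(mu, eps) > M  (discrete time), with min of the empty set = +infinity *)
Definition T2_disc_gt (d : nat -> R) (eps : R) (M : nat) : Prop :=
  forall m, (m <= M)%nat -> eps < d m.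

Definition T2_disc_to_infty (d : nat -> nat -> R) (eps : R) : Prop :=
  forall M, exists n0, forall n, (n0 <= n)%nat -> T2_disc_gt (d n) eps M.

(* For a reversible chain the L^2 distance [d] is log-convex in time: with [w_t = mu H_t / pi - 1],
   self-adjointness of [H_s] in [L^2(pi)] gives [d(t+s)^2 = <w_t, H_(2s) w_t> <= d(t) d(t+2s)] by
   Cauchy-Schwarz, and [H_s] is a contraction, so [d] is also nonincreasing.  For such a profile let
   [s_n] be the first time [d_n] drops below a small fixed level.  If [d_n] stays above [c > 0] at
   [A t_n] and vanishes at [B t_n], comparing [log d_n] with its chords through [s_n] and [B t_n]
   shows that [d_n] explodes before [(1 - a) s_n] and vanishes after [(1 + a) s_n]: a cutoff at
   [s_n].  This needs [s_n -> oo]; in continuous time the profile is sampled on the grid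
   [t_n / (n + 1) * N], in discrete time [T_2 -> oo] provides it. *)

From Coquelicot Require Import Coquelicot.
From Stdlib Require Import Reals Lra Lia ClassicalEpsilon Relations Factorial Wf_nat.
(* Imported last, since Coquelicot also defines [nfloor]. *)
Open Scope R_scope.

(** * Log-convex sequences *)

Lemma pow_le_reg (x y : R) (n : nat) :
  0 <= x -> 0 <= y -> (1 <= n)%nat -> x ^ n <= y ^ n -> x <= y.
Proof.
  intros Hx Hy Hn H. destruct (Rle_lt_dec x y) as [|Hlt]; auto.
  exfalso. assert (y ^ n < x ^ n); [|lra].
  destruct n as [|n]; [lia|]. clear Hn H.
  induction n as [|n IH]; simpl in *; [lra|].
  assert (0 <= y * y ^ n) by (apply Rmult_le_pos; auto; apply pow_le; auto).
  nra.
Qed.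

Lemma pow_le_1_antimono (x : R) (n m : nat) :
  0 <= x <= 1 -> (n <= m)%nat -> x ^ m <= x ^ n.
Proof.
  intros Hx Hnm. induction Hnm; [lra|]. simpl.
  assert (0 <= x ^ m) by (apply pow_le; lra). nra.
Qed.

Lemma nonincr_le (D : nat -> R) :
  (forall m, D (S m) <= D m) -> forall m m', (m <= m')%nat -> D m' <= D m.
Proof. intros H m m' Hm. induction Hm; [lra|]. specialize (H m0). lra. Qed.

Lemma geometric_upper_bound (D : nat -> R) (rho : R) (i l : nat) : 0 <= rho ->
  (forall m, (i <= m < i + l)%nat -> D (S m) <= rho * D m) ->
  D (i + l)%nat <= D i * rho ^ l.
Proof.
  intros Hr. induction l as [|l IH]; intros H.
  - rewrite Nat.add_0_r. simpl. lra.
  - replace (i + S l)%nat with (S (i + l)) by lia.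
    assert (D (S (i + l)) <= rho * D (i + l)%nat) by (apply H; lia).
    assert (D (i + l)%nat <= D i * rho ^ l) by (apply IH; intros; apply H; lia).
    simpl. nra.
Qed.

Lemma geometric_lower_bound (D : nat -> R) (rho : R) (j l : nat) : 0 <= rho ->
  (forall m, (j <= m < j + l)%nat -> rho * D m <= D (S m)) ->
  rho ^ l * D j <= D (j + l)%nat.
Proof.
  intros Hr. induction l as [|l IH]; intros H.
  - rewrite Nat.add_0_r. simpl. lra.
  - replace (j + S l)%nat with (S (j + l)) by lia.
    assert (rho * D (j + l)%nat <= D (S (j + l))) by (apply H; lia).
    assert (rho ^ l * D j <= D (j + l)%nat) by (apply IH; intros; apply H; lia).
    assert (0 <= rho ^ l) by (apply pow_le; auto).
    simpl. nra.
Qed.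

Lemma pow_interpolate (x y z rho : R) (a b : nat) :
  0 <= x -> 0 <= y -> 0 < rho -> y <= x * rho ^ b -> rho ^ a * y <= z ->
  y ^ (a + b) <= x ^ a * z ^ b.
Proof.
  intros Hx Hy Hr Hxy Hyz.
  assert (A1 : y ^ a <= x ^ a * rho ^ (b * a)).
  { rewrite pow_mult, <- Rpow_mult_distr. apply pow_incr. lra. }
  assert (A2 : rho ^ (b * a) * y ^ b <= z ^ b).
  { rewrite Nat.mul_comm, pow_mult, <- Rpow_mult_distr. apply pow_incr.
    split; [apply Rmult_le_pos; [apply pow_le|]|]; lra. }
  assert (0 < rho ^ (b * a)) by (apply pow_lt; auto).
  assert (0 <= y ^ b) by (apply pow_le; auto).
  assert (0 <= x ^ a) by (apply pow_le; auto).
  rewrite pow_add. apply (Rmult_le_reg_l (rho ^ (b * a))); auto.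
  replace (rho ^ (b * a) * (y ^ a * y ^ b)) with (y ^ a * (rho ^ (b * a) * y ^ b)) by ring.
  replace (rho ^ (b * a) * (x ^ a * z ^ b)) with (x ^ a * rho ^ (b * a) * z ^ b) by ring.
  apply Rmult_le_compat; auto; [apply pow_le|apply Rmult_le_pos]; lra.
Qed.

Section LogConvexSequence.
Variable D : nat -> R.
Hypothesis D_ge0 : forall m, 0 <= D m.
Hypothesis D_nonincr : forall m, D (S m) <= D m.
Hypothesis D_logconvex : forall m, D (S m) ^ 2 <= D m * D (S (S m)).

Lemma logconvex_zero_before k : D k = 0 -> forall m, (1 <= m <= k)%nat -> D m = 0.
Proof.
  intros Hk m [Hm1 Hmk]. induction Hmk as [|k Hmk IH]; auto.
  apply IH. destruct k as [|k]; [lia|].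
  pose proof (D_logconvex k) as H. rewrite Hk in H. pose proof (D_ge0 (S k)). nra.
Qed.

Lemma logconvex_ratio_nondecr k : (forall m, (m <= k)%nat -> 0 < D m) ->
  forall m m', (m <= m')%nat -> (m' < k)%nat -> D (S m) / D m <= D (S m') / D m'.
Proof.
  intros Hpos m m' Hm. induction Hm as [|m' Hm IH]; intros Hk; [lra|].
  eapply Rle_trans; [apply IH; lia|].
  pose proof (D_logconvex m'). pose proof (Hpos m' ltac:(lia)). pose proof (Hpos (S m') ltac:(lia)).
  apply (Rmult_le_reg_r (D m' * D (S m'))); [nra|].
  replace (D (S m') / D m' * (D m' * D (S m'))) with (D (S m') ^ 2) by (field; lra).
  replace (D (S (S m')) / D (S m') * (D m' * D (S m'))) with (D m' * D (S (S m'))) by (field; lra).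
  auto.
Qed.

Lemma logconvex_chord i j k : (i <= j <= k)%nat ->
  D j ^ (k - i) <= D i ^ (k - j) * D k ^ (j - i).
Proof.
  intros Hijk.
  destruct (Nat.eq_dec i j) as [<-|Hij]; [rewrite Nat.sub_diag; simpl; lra|].
  destruct (Nat.eq_dec j k) as [<-|Hjk]; [rewrite Nat.sub_diag; simpl; lra|].
  destruct (Rle_lt_dec (D k) 0) as [Hk|Hk].
  { assert (D k = 0) by (pose proof (D_ge0 k); lra).
    rewrite (logconvex_zero_before k), pow_i by (auto; lia). apply Rmult_le_pos; apply pow_le; auto. }
  assert (Hpos : forall m, (m <= k)%nat -> 0 < D m).
  { intros m Hm. pose proof (nonincr_le D D_nonincr m k Hm). lra. }
  destruct j as [|j']; [lia|].
  (* Ratios [D (S m) / D m] are nondecreasing: [D] decays at most at rate [rho] before [j]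
     and at least at rate [rho] after it. *)
  set (rho := D (S j') / D j').
  set (j := S j') in *.
  assert (Hrho : 0 < rho) by (apply Rdiv_lt_0_compat; apply Hpos; lia).
  assert (Hratio : forall m, (m < k)%nat ->
            ((m < j)%nat -> D (S m) <= rho * D m) /\ ((j <= m)%nat -> rho * D m <= D (S m))).
  { intros m Hm. pose proof (Hpos m ltac:(lia)).
    replace (D (S m)) with (D (S m) / D m * D m) by (field; lra).
    unfold rho. split; intros; apply Rmult_le_compat_r; try lra;
      apply logconvex_ratio_nondecr with k; auto; lia. }
  pose proof (geometric_upper_bound D rho i (j - i) ltac:(lra)) as H1.
  pose proof (geometric_lower_bound D rho j (k - j) ltac:(lra)) as H2.
  replace (i + (j - i))%nat with j in H1 by lia.
  replace (j + (k - j))%nat with k in H2 by lia.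
  specialize (H1 ltac:(intros m Hm; apply Hratio; lia)).
  specialize (H2 ltac:(intros m Hm; apply Hratio; lia)).
  replace (k - i)%nat with ((k - j) + (j - i))%nat by lia.
  apply (pow_interpolate _ _ _ rho); auto; lra.
Qed.

Lemma logconvex_decay_after (s m q C : nat) (e : R) :
  D s <= 1 -> (s < m <= q)%nat -> (q - s <= C * (m - s))%nat ->
  0 <= e <= 1 -> e <= D m -> e ^ C <= D q.
Proof.
  intros Hs Hsmq HqC He Hem.
  pose proof (logconvex_chord s m q ltac:(lia)) as Hch.
  assert (Hsq : D s ^ (q - m) <= 1) by (rewrite <- (pow1 (q - m)); apply pow_incr; split; auto).
  assert (Hq0 : 0 <= D q ^ (m - s)) by (apply pow_le; auto).
  assert (e ^ (C * (m - s)) <= e ^ (q - s)) by (apply pow_le_1_antimono; auto).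
  assert (e ^ (q - s) <= D m ^ (q - s)) by (apply pow_incr; lra).
  assert (D s ^ (q - m) * D q ^ (m - s) <= D q ^ (m - s))
    by (rewrite <- (Rmult_1_l (D q ^ (m - s))) at 2; apply Rmult_le_compat_r; auto).
  rewrite pow_mult in *.
  apply (pow_le_reg _ _ (m - s)); [apply pow_le; lra|auto|lia|lra].
Qed.

Lemma logconvex_blowup_before (m j q C : nat) (e M : R) :
  (m < j <= q)%nat -> (q - j <= C * (j - m))%nat ->
  0 <= e <= 1 -> e <= D j -> 1 <= M -> D m <= M -> e ^ (C + 1) <= M ^ C * D q.
Proof.
  intros Hmjq HqC He Hej HM HmM.
  pose proof (logconvex_chord m j q ltac:(lia)) as Hch.
  set (u := (q - j)%nat) in *. set (v := (j - m)%nat) in *.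
  replace (q - m)%nat with (u + v)%nat in Hch by lia.
  assert (e ^ (C * v + v) <= e ^ (u + v)) by (apply pow_le_1_antimono; auto; lia).
  assert (e ^ (u + v) <= D j ^ (u + v)) by (apply pow_incr; lra).
  assert (D m ^ u <= M ^ (C * v)).
  { apply Rle_trans with (M ^ u); [apply pow_incr; auto|apply Rle_pow; auto]. }
  assert (0 <= D q ^ v) by (apply pow_le; auto).
  assert (D m ^ u * D q ^ v <= M ^ (C * v) * D q ^ v) by (apply Rmult_le_compat_r; auto).
  replace (C * v + v)%nat with ((C + 1) * v)%nat in * by lia.
  rewrite !pow_mult, <- Rpow_mult_distr in *.
  apply (pow_le_reg _ _ v); [apply pow_le; lra|apply Rmult_le_pos; [apply pow_le; lra|auto]|lia|lra].
Qed.
End LogConvexSequence.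

(** * Cutoff for log-convex profiles *)

Lemma nat_above (x : R) : exists n : nat, x <= INR n.
Proof.
  destruct (Rle_lt_dec x 0).
  - exists 0%nat. simpl. lra.
  - destruct (archimed x) as [H1 _]. exists (Z.to_nat (up x)).
    rewrite INR_IZR_INZ, Znat.Z2Nat.id; [lra|]. apply le_IZR. lra.
Qed.

Lemma nat_above_scaled (x a : R) : 0 < a -> exists n : nat, x <= INR n * a.
Proof.
  intros Ha. destruct (nat_above (x / a)) as [n Hn]. exists n.
  replace x with (x / a * a) by (field; lra). apply Rmult_le_compat_r; lra.
Qed.

Lemma eventually_lt_of_cv0 (u : nat -> R) (e : R) :
  Un_cv u 0 -> 0 < e -> eventually (fun n => u n < e).
Proof.
  intros H He. destruct (H e He) as [n0 Hn0]. exists n0. intros n Hn.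
  specialize (Hn0 n Hn). unfold R_dist in Hn0. rewrite Rminus_0_r in Hn0.
  apply Rabs_def2 in Hn0. lra.
Qed.

Definition hitting_time (D : nat -> R) (e : R) : nat :=
  epsilon (inhabits 0%nat) (fun m => D m <= e /\ forall k, (k < m)%nat -> e < D k).

Lemma hitting_time_spec (D : nat -> R) (e : R) : (exists m, D m <= e) ->
  D (hitting_time D e) <= e /\ forall k, (k < hitting_time D e)%nat -> e < D k.
Proof.
  intros Hex. unfold hitting_time.
  apply (epsilon_spec (inhabits 0%nat) (fun m => D m <= e /\ forall k, (k < m)%nat -> e < D k)).
  destruct (dec_inh_nat_subset_has_unique_least_element (fun m => D m <= e))
    as [m [[Hm Hleast] _]]; [intros; apply classic|auto|].
  exists m. split; auto. intros k Hk. apply Rnot_le_lt. intros Hke.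
  specialize (Hleast k Hke). lia.
Qed.

Section LogConvexFamily.
Variable D : nat -> nat -> R.
Hypothesis D_ge0 : forall n m, 0 <= D n m.
Hypothesis D_nonincr : forall n m, D n (S m) <= D n m.
Hypothesis D_logconvex : forall n m, D n (S m) ^ 2 <= D n m * D n (S (S m)).
Variables (p q : nat -> nat) (delta : R) (C : nat).
Hypothesis delta_pos : 0 < delta.
Hypothesis D_p_ge : eventually (fun n => delta <= D n (p n)).
Hypothesis D_q_cv0 : Un_cv (fun n => D n (q n)) 0.
Hypothesis p_unbounded : forall K, eventually (fun n => (K <= p n)%nat).
Hypothesis q_le_p : eventually (fun n => (q n <= C * p n)%nat).

(* The cutoff time is the first time the profile drops to [eps], a level below [delta] and [1]. *)
Let eps := Rmin delta 1 / 2.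
Let s n := hitting_time (D n) eps.

Lemma eps_bounds : 0 < eps < delta /\ eps <= 1 / 2.
Proof. unfold eps. apply Rmin_case_strong; intros; lra. Qed.

Lemma hitting_time_window : eventually (fun n =>
  D n (s n) <= eps /\ (forall k, (k < s n)%nat -> eps < D n k) /\
  (p n < s n <= q n)%nat /\ (1 <= p n)%nat).
Proof.
  destruct eps_bounds as [[He Hed] _].
  generalize (filter_and _ _ (filter_and _ _ D_p_ge (eventually_lt_of_cv0 _ _ D_q_cv0 He))
                (p_unbounded 1)).
  apply filter_imp. intros n [[Hp Hq] Hp1].
  destruct (hitting_time_spec (D n) eps) as [Hs Hbefore]; [exists (q n); lra|].
  fold (s n) in Hs, Hbefore. repeat split; auto.
  - destruct (Nat.lt_ge_cases (p n) (s n)) as [|Hge]; auto.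
    pose proof (nonincr_le (D n) (D_nonincr n) _ _ Hge). lra.
  - destruct (Nat.le_gt_cases (s n) (q n)) as [|Hgt]; auto.
    specialize (Hbefore (q n) Hgt). lra.
Qed.

Lemma hitting_time_unbounded K : eventually (fun n => (K <= s n)%nat).
Proof.
  generalize (filter_and _ _ hitting_time_window (p_unbounded K)).
  apply filter_imp. intros n [[_ [_ [Hps _]]] HK]. lia.
Qed.

Lemma decay_after_hitting_time a eta : 0 < a -> 0 < eta ->
  eventually (fun n => forall m, (1 + a) * INR (s n) <= INR m -> D n m <= eta).
Proof.
  intros Ha Heta. destruct eps_bounds as [_ He1].
  set (e := Rmin eta (1 / 2)).
  assert (He : 0 < e <= 1 / 2) by (unfold e; apply Rmin_case_strong; intros; lra).
  assert (Heeta : e <= eta) by apply Rmin_l.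
  destruct (nat_above_scaled (INR C) a Ha) as [C' HC'].
  assert (HeC : 0 < e ^ C') by (apply pow_lt; lra).
  generalize (filter_and _ _ (filter_and _ _ hitting_time_window q_le_p)
                (eventually_lt_of_cv0 _ _ D_q_cv0 (Rmin_pos _ _ (proj1 He) HeC))).
  apply filter_imp. intros n [[[Hs [_ [[Hps Hsq] Hp1]]] Hqp] Hq] m Hm.
  pose proof (Rmin_l e (e ^ C')). pose proof (Rmin_r e (e ^ C')).
  destruct (Nat.le_gt_cases (q n) m) as [Hqm|Hmq].
  { pose proof (nonincr_le (D n) (D_nonincr n) _ _ Hqm). lra. }
  apply Rnot_lt_le. intros Hbig.
  assert (Hs1 : 1 <= INR (s n)) by (apply (le_INR 1); lia).
  assert (Hsm : (s n < m)%nat) by (apply INR_lt; nra).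
  assert (HqC : (q n - s n <= C' * (m - s n))%nat).
  { apply INR_le. rewrite mult_INR, !minus_INR by lia.
    apply le_INR in Hqp. apply lt_INR in Hps. rewrite mult_INR in Hqp.
    pose proof (pos_INR C). pose proof (pos_INR C'). nra. }
  pose proof (logconvex_decay_after (D n) (D_ge0 n) (D_nonincr n) (D_logconvex n)
                (s n) m (q n) C' e ltac:(lra) ltac:(lia) HqC ltac:(lra) ltac:(lra)).
  lra.
Qed.

Lemma blowup_before_hitting_time a M : 0 < a < 1 ->
  eventually (fun n => forall m, INR m <= (1 - a) * INR (s n) -> M <= D n m).
Proof.
  intros Ha. destruct eps_bounds as [[He _] He1].
  set (M' := Rmax M 1).
  assert (HM' : 1 <= M') by apply Rmax_r.
  assert (HMM' : M <= M') by apply Rmax_l.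
  destruct (nat_above_scaled (2 * (INR C + 1)) a ltac:(lra)) as [C' HC'].
  assert (HMC : 0 < M' ^ C') by (apply pow_lt; lra).
  assert (Hthr : 0 < eps ^ (C' + 1) / M' ^ C') by (apply Rdiv_lt_0_compat; [apply pow_lt|]; lra).
  destruct (nat_above_scaled 2 a ltac:(lra)) as [K HK].
  generalize (filter_and _ _ (filter_and _ _ hitting_time_window q_le_p)
                (filter_and _ _ (eventually_lt_of_cv0 _ _ D_q_cv0 Hthr) (p_unbounded K))).
  apply filter_imp. intros n [[[_ [Hbefore [[Hps Hsq] Hp1]]] Hqp] [Hq HpK]] m Hm.
  apply Rnot_lt_le. intros Hsmall.
  assert (Has : 2 <= a * INR (s n)).
  { apply lt_INR in Hps. apply le_INR in HpK. nra. }
  assert (Hj : (m < s n - 1)%nat).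
  { apply INR_lt. rewrite minus_INR by (apply INR_le; simpl; nra). simpl. nra. }
  assert (HqC : (q n - (s n - 1) <= C' * (s n - 1 - m))%nat).
  { apply INR_le. rewrite mult_INR, !minus_INR by lia. simpl.
    apply le_INR in Hqp. apply lt_INR in Hps. rewrite mult_INR in Hqp.
    pose proof (pos_INR C). pose proof (pos_INR C'). pose proof (pos_INR m). nra. }
  pose proof (logconvex_blowup_before (D n) (D_ge0 n) (D_nonincr n) (D_logconvex n)
                m (s n - 1) (q n) C' eps M' ltac:(lia) HqC ltac:(lra)
                ltac:(left; apply Hbefore; lia) HM' ltac:(lra)).
  assert (D n (q n) * M' ^ C' < eps ^ (C' + 1)).
  { apply (Rmult_lt_compat_r (M' ^ C')) in Hq; auto.
    replace (eps ^ (C' + 1) / M' ^ C' * M' ^ C') with (eps ^ (C' + 1)) in Hq by (field; lra). auto. }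
  lra.
Qed.
End LogConvexFamily.

Lemma nfloor_spec (x : R) : 0 <= x -> INR (nfloor x) <= x /\ x < INR (nfloor x) + 1.
Proof.
  intros Hx. unfold nfloor. destruct (base_Int_part x) as [H1 H2].
  assert (Hz : (0 <= Int_part x)%Z).
  { destruct (archimed x). assert (0 < up x)%Z by (apply lt_IZR; lra).
    unfold Int_part. lia. }
  rewrite INR_IZR_INZ, Znat.Z2Nat.id by auto. lra.
Qed.

Lemma nceil_spec (x : R) : 0 <= x -> x <= INR (nceil x) /\ INR (nceil x) < x + 1.
Proof.
  intros Hx. unfold nceil. destruct (base_Int_part (- x)) as [H1 H2].
  assert (Hz : (0 <= - Int_part (- x))%Z).
  { assert (Int_part (- x) < 1)%Z by (apply lt_IZR; simpl; lra). lia. }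
  rewrite INR_IZR_INZ, Znat.Z2Nat.id by auto. rewrite opp_IZR. lra.
Qed.

Lemma floor_ceil_window (T : nat -> R) (A B : R) :
  0 < A < B -> (forall X, eventually (fun n => X <= T n)) ->
  (forall K, eventually (fun n => (K <= nfloor (A * T n))%nat)) /\
  exists C, eventually (fun n => (nceil (B * T n) <= C * nfloor (A * T n))%nat).
Proof.
  intros HAB HT. split.
  - intros K. generalize (HT ((INR K + 1) / A)). apply filter_imp. intros n Hn.
    assert (HAT : INR K + 1 <= A * T n).
    { replace (INR K + 1) with (A * ((INR K + 1) / A)) by (field; lra).
      apply Rmult_le_compat_l; lra. }
    destruct (nfloor_spec (A * T n)) as [_ H2]; [pose proof (pos_INR K); lra|].
    apply INR_le. lra.
  - destruct (nat_above_scaled (4 * B) A ltac:(lra)) as [C HC]. exists C.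
    generalize (HT (2 / A)). apply filter_imp. intros n Hn.
    assert (HAT : 2 <= A * T n).
    { replace 2 with (A * (2 / A)) by (field; lra). apply Rmult_le_compat_l; lra. }
    destruct (nfloor_spec (A * T n)) as [_ H2]; [lra|].
    destruct (nceil_spec (B * T n)) as [_ H3]; [nra|].
    apply INR_le. rewrite mult_INR. nra.
Qed.

Section LogConvexPrecutoff.
Variable D : nat -> nat -> R.
Hypothesis D_ge0 : forall n m, 0 <= D n m.
Hypothesis D_nonincr : forall n m, D n (S m) <= D n m.
Hypothesis D_logconvex : forall n m, D n (S m) ^ 2 <= D n m * D n (S (S m)).

Lemma logconvex_precutoff_sharpens (T : nat -> R) (A B c : R) :
  0 < A < B -> (forall X, eventually (fun n => X <= T n)) -> 0 < c ->
  eventually (fun n => c <= D n (nfloor (A * T n))) ->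
  Un_cv (fun n => D n (nceil (B * T n))) 0 ->
  exists s : nat -> nat, (forall n, (1 <= s n)%nat) /\
    (forall K, eventually (fun n => (K <= s n)%nat)) /\
    forall a, 0 < a < 1 ->
      (forall eta, 0 < eta ->
         eventually (fun n => forall m, (1 + a) * INR (s n) <= INR m -> D n m <= eta)) /\
      (forall M, eventually (fun n => forall m, INR m <= (1 - a) * INR (s n) -> M <= D n m)).
Proof.
  intros HAB HT Hc Hp Hq.
  destruct (floor_ceil_window T A B HAB HT) as [Hpinf [C HqC]].
  set (s := fun n => hitting_time (D n) (Rmin c 1 / 2)).
  assert (Hs1 : eventually (fun n => Nat.max 1 (s n) = s n)).
  { generalize (hitting_time_unbounded D D_nonincr _ _ c Hc Hp Hq Hpinf 1).
    apply filter_imp. intros n Hn. unfold s. lia. }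
  exists (fun n => Nat.max 1 (s n)). split; [intros; lia|]. split.
  - intros K. generalize (filter_and _ _ Hs1
      (hitting_time_unbounded D D_nonincr _ _ c Hc Hp Hq Hpinf K)).
    apply filter_imp. intros n [-> Hn]. auto.
  - intros a Ha. split.
    + intros eta Heta. generalize (filter_and _ _ Hs1 (decay_after_hitting_time
        D D_ge0 D_nonincr D_logconvex _ _ c C Hc Hp Hq Hpinf HqC a eta ltac:(lra) Heta)).
      apply filter_imp. intros n [-> Hn]. auto.
    + intros M. generalize (filter_and _ _ Hs1 (blowup_before_hitting_time
        D D_ge0 D_nonincr D_logconvex _ _ c C Hc Hp Hq Hpinf HqC a M Ha)).
      apply filter_imp. intros n [-> Hn]. auto.
Qed.
End LogConvexPrecutoff.

Lemma precutoff_of_cutoff_disc (d : nat -> nat -> R) : cutoff_disc d -> precutoff_disc d.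
Proof.
  intros [tn [Htn Hc]]. destruct (Hc (/ 2) ltac:(lra)) as [Hup Hinf].
  exists tn, (1 - / 2), (1 + / 2). repeat split; auto; try lra.
  exists 1. split; [lra|]. destruct (Hinf 1) as [n0 H0]. exists n0. intros n Hn. left. auto.
Qed.

Lemma precutoff_of_cutoff_cont (d : nat -> R -> R) : cutoff_cont d -> precutoff_cont d.
Proof.
  intros [tn [Htn Hc]]. destruct (Hc (/ 2) ltac:(lra)) as [Hup Hinf].
  exists tn, (1 - / 2), (1 + / 2). repeat split; auto; try lra.
  exists 1. split; [lra|]. destruct (Hinf 1) as [n0 H0]. exists n0. intros n Hn. left. auto.
Qed.

Lemma Un_cv0_of_eventually_le (u : nat -> R) :
  (forall n, 0 <= u n) -> (forall e, 0 < e -> eventually (fun n => u n <= e)) -> Un_cv u 0.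
Proof.
  intros Hu H e He. destruct (H (e / 2) ltac:(lra)) as [n0 Hn0]. exists n0. intros n Hn.
  unfold R_dist. rewrite Rminus_0_r, Rabs_right by (apply Rle_ge, Hu).
  specialize (Hn0 n Hn). lra.
Qed.

Lemma cv_infty_of_eventually_ge (u : nat -> R) :
  (forall M, eventually (fun n => M <= u n)) -> cv_infty u.
Proof. intros H M. destruct (H (M + 1)) as [n0 Hn0]. exists n0. intros n Hn. specialize (Hn0 n Hn). lra. Qed.

Section LogConvexProfiles.
Variable d : nat -> nat -> R.
Hypothesis d_ge0 : forall n m, 0 <= d n m.
Hypothesis d_nonincr : forall n m, d n (S m) <= d n m.
Hypothesis d_logconvex : forall n m, d n (S m) ^ 2 <= d n m * d n (S (S m)).

(* Discrete time cannot be resampled on a finer grid, so [T_2 -> oo] is what makes the time scale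
   grow. *)
Lemma precutoff_time_unbounded (eps0 : R) (tn : nat -> R) (B : R) :
  0 < eps0 -> T2_disc_to_infty d eps0 -> (forall n, 0 < tn n) -> 0 < B ->
  Un_cv (fun n => d n (nceil (B * tn n))) 0 ->
  forall X, eventually (fun n => X <= tn n).
Proof.
  intros He0 HT2 Htn HB Hq X. destruct (nat_above (B * X)) as [M HM].
  generalize (filter_and _ _ (HT2 M) (eventually_lt_of_cv0 _ _ Hq He0)).
  apply filter_imp. intros n [HM' Hlt].
  apply Rnot_lt_le. intros HX. pose proof (Htn n).
  destruct (nceil_spec (B * tn n)) as [_ Hc]; [nra|].
  assert (Hle : (nceil (B * tn n) <= M)%nat).
  { apply Nat.lt_succ_r, INR_lt. rewrite S_INR.
    assert (B * tn n < B * X) by (apply Rmult_lt_compat_l; lra). lra. }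
  specialize (HM' _ Hle). lra.
Qed.

Lemma cutoff_of_precutoff_disc (eps0 : R) :
  0 < eps0 -> T2_disc_to_infty d eps0 -> precutoff_disc d -> cutoff_disc d.
Proof.
  intros He0 HT2 [tn [A [B [Htn [HA [HAB [Hq [c [Hc Hp]]]]]]]]].
  destruct (logconvex_precutoff_sharpens d d_ge0 d_nonincr d_logconvex tn A B c
              ltac:(lra) (precutoff_time_unbounded eps0 tn B He0 HT2 Htn ltac:(lra) Hq) Hc Hp Hq)
    as [s [Hs1 [_ Hcut]]].
  exists (fun n => INR (s n)). split; [intros n; apply lt_0_INR; specialize (Hs1 n); lia|].
  intros a Ha. destruct (Hcut a Ha) as [Hup Hlow]. split.
  - apply Un_cv0_of_eventually_le; auto. intros e He.
    generalize (Hup e He). apply filter_imp. intros n Hn. apply Hn.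
    apply nceil_spec. pose proof (pos_INR (s n)). nra.
  - apply cv_infty_of_eventually_ge. intros M.
    generalize (Hlow M). apply filter_imp. intros n Hn. apply Hn.
    apply nfloor_spec. pose proof (pos_INR (s n)). nra.
Qed.

Lemma logconvex_cutoff_iff_precutoff_disc (eps0 : R) :
  0 < eps0 -> T2_disc_to_infty d eps0 -> (cutoff_disc d <-> precutoff_disc d).
Proof.
  intros He0 HT2. split; [apply precutoff_of_cutoff_disc|apply (cutoff_of_precutoff_disc eps0); auto].
Qed.
End LogConvexProfiles.

Section LogConvexContinuousProfiles.
Variable d : nat -> R -> R.
Hypothesis d_ge0 : forall n t, 0 <= d n t.
Hypothesis d_nonincr : forall n s t, 0 <= s <= t -> d n t <= d n s.
Hypothesis d_logconvex : forall n t h, 0 <= t -> 0 < h -> d n (t + h) ^ 2 <= d n t * d n (t + 2 * h).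
Section Sampling.
Variable h : nat -> R.
Hypothesis h_pos : forall n, 0 < h n.

Let E n m := d n (h n * INR m).

Lemma sampled_profile_logconvex :
  (forall n m, 0 <= E n m) /\ (forall n m, E n (S m) <= E n m) /\
  (forall n m, E n (S m) ^ 2 <= E n m * E n (S (S m))).
Proof.
  split; [|split]; intros n m; unfold E; pose proof (h_pos n); pose proof (pos_INR m).
  - apply d_ge0.
  - apply d_nonincr. rewrite S_INR. nra.
  - replace (h n * INR (S m)) with (h n * INR m + h n) by (rewrite S_INR; ring).
    replace (h n * INR (S (S m))) with (h n * INR m + 2 * h n) by (rewrite !S_INR; ring).
    apply d_logconvex; nra.
Qed.

Lemma profile_between_samples n t : 0 <= t ->
  E n (nceil (t / h n)) <= d n t <= E n (nfloor (t / h n)).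
Proof.
  intros Ht. pose proof (h_pos n).
  assert (Hth : 0 <= t / h n) by (apply Rdiv_le_0_compat; lra).
  destruct (nfloor_spec _ Hth) as [F _]. destruct (nceil_spec _ Hth) as [Cl _].
  assert (Hscale : forall x, x <= t / h n -> h n * x <= t).
  { intros x Hx. apply (Rmult_le_compat_l (h n)) in Hx; [|lra].
    replace (h n * (t / h n)) with t in Hx by (field; lra). auto. }
  assert (Hscale' : forall x, t / h n <= x -> t <= h n * x).
  { intros x Hx. apply (Rmult_le_compat_l (h n)) in Hx; [|lra].
    replace (h n * (t / h n)) with t in Hx by (field; lra). auto. }
  unfold E. split; apply d_nonincr; split; auto;
    try (apply Rmult_le_pos; [lra|apply pos_INR]).
Qed.
Lemma cutoff_cont_of_sampled_cutoff (s : nat -> nat) :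
  (forall n, (1 <= s n)%nat) -> (forall K, eventually (fun n => (K <= s n)%nat)) ->
  (forall a, 0 < a < 1 ->
    (forall eta, 0 < eta ->
       eventually (fun n => forall m, (1 + a) * INR (s n) <= INR m -> E n m <= eta)) /\
    (forall M, eventually (fun n => forall m, INR m <= (1 - a) * INR (s n) -> M <= E n m))) ->
  cutoff_cont d.
Proof.
  intros Hs1 Hsinf Hcut.
  exists (fun n => h n * INR (s n)). split.
  { intros n. apply Rmult_lt_0_compat; auto. apply lt_0_INR. specialize (Hs1 n). lia. }
  (* Rounding to the grid costs one step, absorbed once [a / 2 * s n >= 1]. *)
  intros a Ha. destruct (Hcut (a / 2) ltac:(lra)) as [Hup Hlow].
  destruct (nat_above_scaled 2 a ltac:(lra)) as [K HK].
  assert (HsK : eventually (fun n => 2 <= a * INR (s n))).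
  { generalize (Hsinf K). apply filter_imp. intros n Hn. apply le_INR in Hn. nra. }
  assert (Hscaled : forall x n, x * (h n * INR (s n)) / h n = x * INR (s n)).
  { intros x n. pose proof (h_pos n). field. lra. }
  split.
  - apply Un_cv0_of_eventually_le; [intros; apply d_ge0|]. intros e He.
    generalize (filter_and _ _ HsK (Hup e He)). apply filter_imp. intros n [Has Hn].
    pose proof (pos_INR (s n)). pose proof (h_pos n).
    eapply Rle_trans; [apply (proj2 (profile_between_samples n ((1 + a) * (h n * INR (s n))) ltac:(nra)))|].
    rewrite Hscaled. apply Hn.
    destruct (nfloor_spec ((1 + a) * INR (s n))) as [_ F]; nra.
  - apply cv_infty_of_eventually_ge. intros M.
    generalize (filter_and _ _ HsK (Hlow M)). apply filter_imp. intros n [Has Hn].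
    pose proof (pos_INR (s n)). pose proof (h_pos n).
    assert (Ht : 0 <= (1 - a) * (h n * INR (s n))) by (apply Rmult_le_pos; [lra|apply Rmult_le_pos; lra]).
    eapply Rle_trans; [|apply (proj1 (profile_between_samples n _ Ht))].
    rewrite Hscaled. apply Hn.
    destruct (nceil_spec ((1 - a) * INR (s n))) as [_ F]; nra.
Qed.
End Sampling.

Lemma cutoff_of_precutoff_cont : precutoff_cont d -> cutoff_cont d.
Proof.
  intros [tn [A [B [Htn [HA [HAB [Hq [c [Hc Hp]]]]]]]]].
  set (h n := tn n / INR (S n)).
  assert (Hh : forall n, 0 < h n).
  { intros n. apply Rdiv_lt_0_compat; auto. apply lt_0_INR. lia. }
  assert (Hgrid : forall n x, x * tn n / h n = x * INR (S n)).
  { intros n x. unfold h. field. split; [apply not_0_INR; lia|pose proof (Htn n); lra]. }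
  destruct (sampled_profile_logconvex h Hh) as [HE0 [HEmon HEcvx]].
  assert (Hp' : eventually (fun n => c <= d n (h n * INR (nfloor (A * INR (S n)))))).
  { generalize (Hp : eventually (fun n => c <= d n (A * tn n))). apply filter_imp.
    intros n Hn. rewrite <- (Hgrid n A). pose proof (Htn n).
    eapply Rle_trans; [apply Hn|apply (proj2 (profile_between_samples h Hh n (A * tn n) ltac:(nra)))]. }
  assert (Hq' : Un_cv (fun n => d n (h n * INR (nceil (B * INR (S n))))) 0).
  { apply Un_cv0_of_eventually_le; [intros; apply d_ge0|]. intros e He.
    generalize (eventually_lt_of_cv0 _ _ Hq He). apply filter_imp. intros n Hn.
    rewrite <- (Hgrid n B). pose proof (Htn n).
    eapply Rle_trans; [apply (proj1 (profile_between_samples h Hh n (B * tn n) ltac:(nra)))|lra]. }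
  assert (HT : forall X, eventually (fun n => X <= INR (S n))).
  { intros X. destruct (nat_above X) as [k Hk]. exists k. intros n Hn.
    apply le_INR in Hn. rewrite S_INR. lra. }
  destruct (logconvex_precutoff_sharpens _ HE0 HEmon HEcvx (fun n => INR (S n)) A B c
              ltac:(lra) HT Hc Hp' Hq') as [s [Hs1 [Hsinf Hcut]]].
  apply (cutoff_cont_of_sampled_cutoff h Hh s); auto.
Qed.

Lemma logconvex_cutoff_iff_precutoff_cont : cutoff_cont d <-> precutoff_cont d.
Proof. split; [apply precutoff_of_cutoff_cont|apply cutoff_of_precutoff_cont]. Qed.
End LogConvexContinuousProfiles.

(** * Reversible Markov kernels *)

Lemma fsum_ext N f g : (forall x, (x < N)%nat -> f x = g x) -> fsum N f = fsum N g.
Proof.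
  induction N as [|N IHN]; simpl; intros H; auto.
  rewrite IHN by (intros; apply H; lia). rewrite (H N) by lia. auto.
Qed.

Lemma fsum_plus N f g : fsum N (fun x => f x + g x) = fsum N f + fsum N g.
Proof. induction N as [|N IHN]; simpl; [lra|]. rewrite IHN. lra. Qed.

Lemma fsum_scal_l N c f : fsum N (fun x => c * f x) = c * fsum N f.
Proof. induction N as [|N IHN]; simpl; [lra|]. rewrite IHN. lra. Qed.

Lemma fsum_scal_r N c f : fsum N (fun x => f x * c) = fsum N f * c.
Proof. induction N as [|N IHN]; simpl; [lra|]. rewrite IHN. lra. Qed.

Lemma fsum_zero N : fsum N (fun _ => 0) = 0.
Proof. induction N as [|N IHN]; simpl; [lra|]. rewrite IHN. lra. Qed.

Lemma fsum_swap N M (f : nat -> nat -> R) :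
  fsum N (fun x => fsum M (fun y => f x y)) = fsum M (fun y => fsum N (fun x => f x y)).
Proof.
  induction N as [|N IHN]; simpl.
  - rewrite fsum_zero. auto.
  - rewrite IHN. rewrite <- fsum_plus. auto.
Qed.

Lemma fsum_le N f g : (forall x, (x < N)%nat -> f x <= g x) -> fsum N f <= fsum N g.
Proof.
  induction N as [|N IHN]; simpl; intros H; [lra|].
  pose proof (H N ltac:(lia)). pose proof (IHN ltac:(intros; apply H; lia)). lra.
Qed.

Lemma fsum_nonneg N f : (forall x, (x < N)%nat -> 0 <= f x) -> 0 <= fsum N f.
Proof. intros H. rewrite <- (fsum_zero N). apply fsum_le. auto. Qed.

Lemma fsum_matid_r N f y : (y < N)%nat -> fsum N (fun z => f z * matid z y) = f y.
Proof.
  induction N as [|N IHN]; intros Hy; [lia|]. simpl. unfold matid at 2.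
  destruct (Nat.eqb N y) eqn:E.
  - apply Nat.eqb_eq in E. subst y.
    rewrite (fsum_ext _ _ (fun _ => 0)). { rewrite fsum_zero. lra. }
    intros x Hx. unfold matid. destruct (Nat.eqb x N) eqn:E2; [apply Nat.eqb_eq in E2; lia|lra].
  - apply Nat.eqb_neq in E. rewrite IHN by lia. lra.
Qed.

Lemma fsum_matid_l N f x : (x < N)%nat -> fsum N (fun z => matid x z * f z) = f x.
Proof.
  intros Hx. rewrite <- (fsum_matid_r N f x Hx). apply fsum_ext. intros z Hz.
  unfold matid. rewrite Nat.eqb_sym. lra.
Qed.

Lemma fsum_abs N f : Rabs (fsum N f) <= fsum N (fun x => Rabs (f x)).
Proof.
  induction N as [|N IHN]; simpl.
  - rewrite Rabs_R0. lra.
  - eapply Rle_trans; [apply Rabs_triang|]. lra.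
Qed.

Lemma fsum_term N f y : (y < N)%nat -> (forall x, (x < N)%nat -> 0 <= f x) -> f y <= fsum N f.
Proof.
  induction N as [|N IHN]; intros Hy Hf; [lia|]. simpl.
  destruct (Nat.eq_dec y N) as [->|].
  - pose proof (fsum_nonneg N f ltac:(intros; apply Hf; lia)). lra.
  - pose proof (IHN ltac:(lia) ltac:(intros; apply Hf; lia)). pose proof (Hf N ltac:(lia)). lra.
Qed.

Lemma fsum_sum_f N (f : nat -> nat -> R) k :
  fsum N (fun z => sum_f_R0 (fun j => f z j) k) = sum_f_R0 (fun j => fsum N (fun z => f z j)) k.
Proof.
  induction k as [|k IH]; simpl; auto.
  rewrite fsum_plus, IH. auto.
Qed.

Lemma fsum_neq0_witness N f : fsum N f <> 0 -> exists x, (x < N)%nat /\ f x <> 0.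
Proof.
  intros H. apply NNPP. intro Hno. apply H. rewrite (fsum_ext _ _ (fun _ => 0)).
  - apply fsum_zero.
  - intros x Hx. apply NNPP. intro Hf. apply Hno. exists x; auto.
Qed.

Lemma fsum_cauchy_schwarz N a u v : (forall x, (x < N)%nat -> 0 <= a x) ->
  fsum N (fun x => a x * u x * v x) ^ 2 <=
  fsum N (fun x => a x * u x * u x) * fsum N (fun x => a x * v x * v x).
Proof.
  intros Ha.
  set (P := fsum N (fun x => a x * u x * u x)).
  set (Q := fsum N (fun x => a x * u x * v x)).
  set (R0 := fsum N (fun x => a x * v x * v x)).
  assert (Hq : forall l, 0 <= P - 2 * l * Q + l * l * R0).
  { intros l.
    assert (E : P - 2 * l * Q + l * l * R0 = fsum N (fun x => a x * (u x - l * v x) * (u x - l * v x))).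
    { rewrite (fsum_ext _ _ (fun x => (a x * u x * u x + (-2 * l) * (a x * u x * v x)) + (l * l) * (a x * v x * v x)))
        by (intros; ring).
      rewrite !fsum_plus, !fsum_scal_l. unfold P, Q, R0. ring. }
    rewrite E. apply fsum_nonneg. intros x Hx. specialize (Ha x Hx).
    rewrite Rmult_assoc. apply Rmult_le_pos; auto. apply Rle_0_sqr. }
  assert (HR : 0 <= R0).
  { unfold R0. apply fsum_nonneg. intros x Hx. specialize (Ha x Hx).
    rewrite Rmult_assoc. apply Rmult_le_pos; auto. apply Rle_0_sqr. }
  destruct (Rle_lt_dec R0 0) as [HR0|HR0].
  - assert (R0 = 0) by lra. subst. rewrite H in Hq.
    destruct (Req_dec Q 0) as [HQ|HQ].
    + rewrite HQ. rewrite H. nra.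
    + exfalso. specialize (Hq ((P + 1) / (2 * Q))).
      replace (P - 2 * ((P + 1) / (2 * Q)) * Q + (P + 1) / (2 * Q) * ((P + 1) / (2 * Q)) * 0)
        with (-1) in Hq by (field; auto). lra.
  - specialize (Hq (Q / R0)).
    replace (P - 2 * (Q / R0) * Q + Q / R0 * (Q / R0) * R0) with (P - Q * Q / R0) in Hq by (field; lra).
    assert (Q * Q / R0 <= P) by lra.
    assert (Q * Q <= P * R0).
    { apply (Rmult_le_compat_r R0) in H; [|lra].
      replace (Q * Q / R0 * R0) with (Q * Q) in H by (field; lra). auto. }
    simpl. lra.
Qed.

Lemma pi_pos_of_irreducible N A pi : irreducible N A -> reversible N A pi -> is_prob N pi ->
  forall x, (x < N)%nat -> 0 < pi x.
Proof.
  intros [HN Hirr] Hrev [Hpi0 Hpi1] y Hy.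
  destruct (fsum_neq0_witness N pi ltac:(lra)) as [x0 [Hx0 Hpx0]].
  assert (Hx0p : 0 < pi x0) by (specialize (Hpi0 x0 Hx0); lra).
  specialize (Hirr x0 y Hx0 Hy).
  (* Detailed balance propagates positivity of [pi] along positive transitions. *)
  assert (G : forall u v, clos_refl_trans nat (fun u v => (u < N)%nat /\ (v < N)%nat /\ u <> v /\ 0 < A u v) u v ->
            (u < N)%nat /\ 0 < pi u -> (v < N)%nat /\ 0 < pi v).
  { intros u v Huv. induction Huv as [u v [Hu [Hv [_ Ha]]]| |]; intros [Hu' Hpu]; auto.
    split; auto. specialize (Hrev u v Hu Hv). specialize (Hpi0 v Hv).
    assert (0 < pi u * A u v) by (apply Rmult_lt_0_compat; auto).
    destruct (Rle_lt_dec (pi v) 0); auto. assert (pi v = 0) by lra. rewrite H0 in Hrev. lra. }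
  apply (G x0 y Hirr). auto.
Qed.

Section ReversibleKernel.
Variable N : nat.
Variable P : nat -> nat -> R.
Variable pi : nat -> R.
Hypothesis pi_pos : forall x, (x < N)%nat -> 0 < pi x.
Hypothesis P_ge0 : forall x y, (x < N)%nat -> (y < N)%nat -> 0 <= P x y.
Hypothesis P_row_sum : forall x, (x < N)%nat -> fsum N (P x) = 1.
Hypothesis P_reversible : forall x y, (x < N)%nat -> (y < N)%nat -> pi x * P x y = pi y * P y x.
Variable nu : nat -> nat -> R.
Hypothesis nu_step : forall m y, (y < N)%nat -> nu (S m) y = vecmat N (nu m) P y.

Definition pi_inner (u v : nat -> R) := fsum N (fun y => pi y * u y * v y).
Definition kernel_act (u : nat -> R) (y : nat) := fsum N (fun x => P y x * u x).
Definition rel_dev m y := nu m y / pi y - 1.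

Lemma pi_inner_ext u u' v v' : (forall y, (y < N)%nat -> u y = u' y) -> (forall y, (y < N)%nat -> v y = v' y) ->
  pi_inner u v = pi_inner u' v'.
Proof. intros H1 H2. unfold pi_inner. apply fsum_ext. intros y Hy. rewrite H1, H2; auto. Qed.

Lemma rel_dev_succ m y : (y < N)%nat -> rel_dev (S m) y = kernel_act (rel_dev m) y.
Proof.
  intros Hy. unfold rel_dev, kernel_act. rewrite nu_step by auto. unfold vecmat.
  pose proof (pi_pos y Hy).
  rewrite (fsum_ext _ (fun x => nu m x * P x y) (fun x => pi y * (P y x * (nu m x / pi x - 1)) + pi y * P y x)).
  - rewrite fsum_plus, !fsum_scal_l. rewrite P_row_sum by auto. field. lra.
  - intros x Hx. pose proof (pi_pos x Hx). specialize (P_reversible x y Hx Hy).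
    replace (nu m x * P x y) with ((nu m x / pi x) * (pi x * P x y)) by (field; lra).
    rewrite P_reversible. ring.
Qed.

Lemma kernel_act_selfadjoint u v : pi_inner (kernel_act u) v = pi_inner u (kernel_act v).
Proof.
  unfold pi_inner, kernel_act.
  rewrite (fsum_ext _ _ (fun y => fsum N (fun x => pi y * P y x * u x * v y))).
  2:{ intros y Hy. rewrite <- fsum_scal_l, <- fsum_scal_r. apply fsum_ext. intros; ring. }
  rewrite fsum_swap. apply fsum_ext. intros x Hx.
  rewrite <- fsum_scal_l. apply fsum_ext. intros y Hy. rewrite <- (P_reversible x y Hx Hy). ring.
Qed.

Lemma kernel_act_contraction u : pi_inner (kernel_act u) (kernel_act u) <= pi_inner u u.
Proof.
  unfold pi_inner at 1.
  apply Rle_trans with (fsum N (fun y => pi y * fsum N (fun x => P y x * u x * u x))).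
  - apply fsum_le. intros y Hy. pose proof (pi_pos y Hy).
    rewrite Rmult_assoc. apply Rmult_le_compat_l; [lra|].
    pose proof (fsum_cauchy_schwarz N (P y) u (fun _ => 1) (fun x Hx => P_ge0 y x Hy Hx)) as HCS.
    rewrite (fsum_ext _ (fun x => P y x * 1 * 1) (P y)) in HCS by (intros; ring).
    rewrite P_row_sum in HCS by auto.
    unfold kernel_act.
    rewrite (fsum_ext _ (fun x => P y x * u x * 1) (fun x => P y x * u x)) in HCS by (intros; ring).
    simpl in HCS. lra.
  - unfold pi_inner. rewrite (fsum_ext _ _ (fun y => fsum N (fun x => pi y * P y x * (u x * u x)))).
    2:{ intros y Hy. rewrite <- fsum_scal_l. apply fsum_ext. intros; ring. }
    rewrite fsum_swap. apply Req_le. apply fsum_ext. intros x Hx.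
    rewrite fsum_scal_r. rewrite (fsum_ext _ _ (fun y => pi x * P x y)).
    + rewrite fsum_scal_l, P_row_sum by auto. ring.
    + intros y Hy. rewrite P_reversible; auto.
Qed.

Lemma pi_inner_cauchy_schwarz u v : pi_inner u v <= sqrt (pi_inner u u) * sqrt (pi_inner v v).
Proof.
  pose proof (fsum_cauchy_schwarz N pi u v (fun x Hx => Rlt_le _ _ (pi_pos x Hx))) as H.
  fold (pi_inner u v) (pi_inner u u) (pi_inner v v) in H.
  assert (Hu : 0 <= pi_inner u u) by (apply fsum_nonneg; intros x Hx; pose proof (pi_pos x Hx); nra).
  assert (Hv : 0 <= pi_inner v v) by (apply fsum_nonneg; intros x Hx; pose proof (pi_pos x Hx); nra).
  destruct (Rle_lt_dec (pi_inner u v) 0).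
  - apply Rle_trans with 0; auto. apply Rmult_le_pos; apply sqrt_pos.
  - rewrite <- sqrt_mult by auto. rewrite <- (sqrt_pow2 (pi_inner u v)) by lra.
    apply sqrt_le_1_alt. auto.
Qed.

Definition dist m := l2dist N (nu m) pi.

Lemma dist_pi_inner m : dist m = sqrt (pi_inner (rel_dev m) (rel_dev m)).
Proof. unfold dist, l2dist, pi_inner, rel_dev. f_equal. apply fsum_ext. intros; ring. Qed.

Lemma dist_ge0 m : 0 <= dist m.
Proof. unfold dist, l2dist. apply sqrt_pos. Qed.

Lemma dist_nonincr m : dist (S m) <= dist m.
Proof.
  rewrite !dist_pi_inner. apply sqrt_le_1_alt.
  rewrite (pi_inner_ext _ (kernel_act (rel_dev m)) _ (kernel_act (rel_dev m))) by (intros; apply rel_dev_succ; auto).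
  apply kernel_act_contraction.
Qed.

(* Self-adjointness gives [dist (S m) ^ 2 = <rel_dev m, P^2 rel_dev m>], then Cauchy-Schwarz. *)
Lemma dist_logconvex m : dist (S m) ^ 2 <= dist m * dist (S (S m)).
Proof.
  rewrite !dist_pi_inner.
  assert (H0 : 0 <= pi_inner (rel_dev (S m)) (rel_dev (S m)))
    by (apply fsum_nonneg; intros x Hx; pose proof (pi_pos x Hx); nra).
  rewrite pow2_sqrt by auto.
  rewrite (pi_inner_ext _ (kernel_act (rel_dev m)) _ (kernel_act (rel_dev m))) by (intros; apply rel_dev_succ; auto).
  rewrite kernel_act_selfadjoint.
  rewrite (pi_inner_ext (rel_dev m) (rel_dev m) (kernel_act (kernel_act (rel_dev m))) (rel_dev (S (S m)))).
  - apply pi_inner_cauchy_schwarz.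
  - auto.
  - intros y Hy. rewrite rel_dev_succ by auto. unfold kernel_act.
    apply fsum_ext. intros x Hx. rewrite rel_dev_succ; auto.
Qed.
End ReversibleKernel.

Lemma vecmat_matpow_S N mu K m y :
  vecmat N mu (matpow N K (S m)) y = vecmat N (vecmat N mu (matpow N K m)) K y.
Proof.
  unfold vecmat. simpl. unfold matmul.
  rewrite (fsum_ext _ _ (fun x => fsum N (fun z => mu x * matpow N K m x z * K z y))).
  2:{ intros x Hx. rewrite <- fsum_scal_l. apply fsum_ext. intros; ring. }
  rewrite fsum_swap. apply fsum_ext. intros z Hz. rewrite <- fsum_scal_r. auto.
Qed.

Lemma d2_disc_logconvex N K pi mu :
  is_kernel N K -> irreducible N K -> stationary_kernel N K pi -> reversible N K pi ->
  (forall m, 0 <= d2_disc N K pi mu m) /\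
  (forall m, d2_disc N K pi mu (S m) <= d2_disc N K pi mu m) /\
  (forall m, d2_disc N K pi mu (S m) ^ 2 <= d2_disc N K pi mu m * d2_disc N K pi mu (S (S m))).
Proof.
  intros Hk Hirr [Hprob _] Hrev.
  pose proof (pi_pos_of_irreducible N K pi Hirr Hrev Hprob) as Hpi.
  assert (HP0 : forall x y, (x < N)%nat -> (y < N)%nat -> 0 <= K x y) by (intros x y Hx Hy; apply (Hk x Hx); auto).
  assert (HP1 : forall x, (x < N)%nat -> fsum N (K x) = 1) by (intros x Hx; apply (Hk x Hx)).
  set (nu := fun m => vecmat N mu (matpow N K m)).
  assert (Hnu : forall m y, (y < N)%nat -> nu (S m) y = vecmat N (nu m) K y)
    by (intros; unfold nu; apply vecmat_matpow_S).
  split; [|split]; intros m.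
  - apply (dist_ge0 N pi nu m).
  - apply (dist_nonincr N K pi Hpi HP0 HP1 Hrev nu Hnu m).
  - apply (dist_logconvex N K pi Hpi HP1 Hrev nu Hnu m).
Qed.

(** * The heat semigroup *)

Lemma is_series_zero : is_series (fun _ : nat => 0) 0.
Proof.
  apply is_series_Reals. intros e He. exists 0%nat. intros n _.
  unfold R_dist. replace (sum_f_R0 (fun _ => 0) n) with 0.
  - rewrite Rminus_0_r, Rabs_R0. auto.
  - induction n; simpl; [auto|]. rewrite <- IHn. ring.
Qed.

Lemma fsum_series N (a : nat -> nat -> R) (l : nat -> R) :
  (forall z, (z < N)%nat -> is_series (a z) (l z)) ->
  is_series (fun k => fsum N (fun z => a z k)) (fsum N l).
Proof.
  induction N as [|N IHN]; intros H; simpl.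
  - apply is_series_zero.
  - apply (is_series_plus (V:=R_NormedModule)); [apply IHN; intros; apply H; lia|apply H; lia].
Qed.

Lemma is_series_eq (a : nat -> R) l1 l2 : is_series a l1 -> is_series a l2 -> l1 = l2.
Proof. intros H1 H2. rewrite <- (is_series_unique a l1 H1). apply is_series_unique; auto. Qed.

Lemma is_series_nonneg (a : nat -> R) l : is_series a l -> (forall n, 0 <= a n) -> 0 <= l.
Proof.
  intros H Ha. apply is_series_Reals in H.
  apply Rle_cv_lim with (Un := fun _ => 0) (Vn := fun n => sum_f_R0 a n).
  - intros n. induction n; simpl; [apply Ha|]. specialize (Ha (S n)). lra.
  - intros e He. exists 0%nat. intros. unfold R_dist. rewrite Rminus_0_r, Rabs_R0. auto.
  - apply H.
Qed.

Lemma exp_series (x : R) : is_series (fun i => x ^ i / INR (fact i)) (exp x).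
Proof.
  apply is_series_Reals. pose proof (proj2_sig (exist_exp x)) as H. fold (exp x) in H.
  intros e He. destruct (H e He) as [n0 Hn0]. exists n0. intros n Hn.
  replace (sum_f_R0 (fun i => x ^ i / INR (fact i)) n) with (sum_f_R0 (fun i => / INR (fact i) * x ^ i) n).
  - apply Hn0; auto.
  - apply sum_eq. intros. unfold Rdiv. ring.
Qed.

Lemma exp_cauchy_coeff (s t : R) (k : nat) :
  sum_f_R0 (fun j => s ^ j / INR (fact j) * (t ^ (k - j) / INR (fact (k - j)))) k
  = (s + t) ^ k / INR (fact k).
Proof.
  rewrite binomial.
  transitivity (/ INR (fact k) * sum_f_R0 (fun i => C k i * s ^ i * t ^ (k - i)) k); [|unfold Rdiv; ring].
  rewrite scal_sum. apply sum_eq. intros j Hj. unfold C.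
  field. split; [apply INR_fact_neq_0|]. split; apply INR_fact_neq_0.
Qed.

Section MatrixSeries.
Variable N : nat.

Lemma matmul_assoc A B Cm x y :
  matmul N (matmul N A B) Cm x y = matmul N A (matmul N B Cm) x y.
Proof.
  unfold matmul.
  rewrite (fsum_ext _ _ (fun z => fsum N (fun w => A x w * B w z * Cm z y))).
  2:{ intros z Hz. rewrite <- fsum_scal_r. auto. }
  rewrite fsum_swap. apply fsum_ext. intros w Hw. rewrite <- fsum_scal_l. apply fsum_ext. intros; ring.
Qed.

Lemma matpow_add A j i : forall x y, (y < N)%nat ->
  matpow N A (j + i) x y = matmul N (matpow N A j) (matpow N A i) x y.
Proof.
  induction i as [|i IH]; intros x y Hy.
  - rewrite Nat.add_0_r. simpl. unfold matmul. rewrite fsum_matid_r; auto.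
  - rewrite Nat.add_succ_r. simpl. unfold matmul at 1.
    rewrite (fsum_ext _ _ (fun z => matmul N (matpow N A j) (matpow N A i) x z * A z y)).
    2:{ intros z Hz. rewrite IH; auto. }
    fold (matmul N (matmul N (matpow N A j) (matpow N A i)) A x y).
    rewrite matmul_assoc. auto.
Qed.

Lemma matpow_S_l A k x y : (x < N)%nat -> (y < N)%nat ->
  matpow N A (S k) x y = fsum N (fun z => A x z * matpow N A k z y).
Proof.
  intros Hx Hy. change (S k) with (1 + k)%nat. rewrite matpow_add by auto.
  unfold matmul. apply fsum_ext. intros z Hz. f_equal. simpl. unfold matmul.
  apply (fsum_matid_l N (fun w => A w z) x Hx).
Qed.

Definition entry_abs_sum (A : nat -> nat -> R) := fsum N (fun x => fsum N (fun y => Rabs (A x y))).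

Lemma entry_abs_sum_col A y : (y < N)%nat -> fsum N (fun z => Rabs (A z y)) <= entry_abs_sum A.
Proof.
  intros Hy. unfold entry_abs_sum. apply fsum_le. intros z Hz.
  apply (fsum_term N (fun w => Rabs (A z w)) y Hy). intros; apply Rabs_pos.
Qed.

Lemma abs_le_entry_abs_sum A x y : (x < N)%nat -> (y < N)%nat -> Rabs (A x y) <= entry_abs_sum A.
Proof.
  intros Hx Hy. eapply Rle_trans; [|apply (entry_abs_sum_col A y Hy)].
  apply (fsum_term N (fun z => Rabs (A z y)) x Hx). intros; apply Rabs_pos.
Qed.

Lemma entry_abs_sum_ge0 A : 0 <= entry_abs_sum A.
Proof. unfold entry_abs_sum. apply fsum_nonneg. intros. apply fsum_nonneg. intros. apply Rabs_pos. Qed.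

Lemma matpow_bound A k : forall x y, (y < N)%nat -> Rabs (matpow N A k x y) <= entry_abs_sum A ^ k.
Proof.
  induction k as [|k IH]; intros x y Hy; simpl.
  - unfold matid. destruct (Nat.eqb x y); rewrite ?Rabs_R1, ?Rabs_R0; lra.
  - unfold matmul. eapply Rle_trans; [apply fsum_abs|].
    apply Rle_trans with (fsum N (fun z => entry_abs_sum A ^ k * Rabs (A z y))).
    + apply fsum_le. intros z Hz. rewrite Rabs_mult. apply Rmult_le_compat_r; [apply Rabs_pos|]. apply IH; auto.
    + rewrite fsum_scal_l. rewrite Rmult_comm. apply Rmult_le_compat_r.
      * apply pow_le, entry_abs_sum_ge0.
      * apply entry_abs_sum_col; auto.
Qed.

Definition heat_term (A : nat -> nat -> R) (t : R) x y (k : nat) := t ^ k / INR (fact k) * matpow N A k x y.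

Lemma heat_term_abs_summable A t x y : (y < N)%nat -> ex_series (fun k => Rabs (heat_term A t x y k)).
Proof.
  intros Hy. apply (@ex_series_le R_AbsRing R_CompleteNormedModule _
    (fun k => (Rabs t * entry_abs_sum A) ^ k / INR (fact k))).
  - intros k. change (norm (Rabs (heat_term A t x y k))) with (Rabs (Rabs (heat_term A t x y k))).
    rewrite Rabs_Rabsolu. unfold heat_term. rewrite Rabs_mult. unfold Rdiv. rewrite Rabs_mult.
    rewrite Rpow_mult_distr. rewrite <- RPow_abs.
    rewrite (Rabs_right (/ INR (fact k))) by (apply Rle_ge; left; apply Rinv_0_lt_compat, INR_fact_lt_0).
    assert (0 <= Rabs t ^ k) by (apply pow_le, Rabs_pos).
    assert (0 < / INR (fact k)) by (apply Rinv_0_lt_compat, INR_fact_lt_0).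
    pose proof (matpow_bound A k x y Hy).
    assert (0 <= Rabs t ^ k * / INR (fact k)) by (apply Rmult_le_pos; lra).
    replace (Rabs t ^ k * entry_abs_sum A ^ k * / INR (fact k))
      with (Rabs t ^ k * / INR (fact k) * entry_abs_sum A ^ k) by ring.
    apply Rmult_le_compat_l; auto.
  - exists (exp (Rabs t * entry_abs_sum A)). apply exp_series.
Qed.

Lemma heat_series A t x y : (y < N)%nat -> is_series (heat_term A t x y) (heat N A t x y).
Proof.
  intros Hy. destruct (ex_series_Rabs _ (heat_term_abs_summable A t x y Hy)) as [l Hl].
  unfold heat. apply is_series_Reals.
  apply (epsilon_spec (inhabits 0)
    (fun l => Un_cv (fun K => sum_f_R0 (fun k => t ^ k / INR (fact k) * matpow N A k x y) K) l)).
  exists l. apply is_series_Reals in Hl. apply Hl.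
Qed.
End MatrixSeries.

(* [binom_shift c k (fun j => A^j)] is the binomial expansion of [(A + c I)^k]. *)
Definition binom_shift (c : R) (k : nat) (b : nat -> R) := sum_f_R0 (fun j => C k j * c ^ (k - j) * b j) k.

Lemma binom_shift_S c k b : binom_shift c (S k) b = binom_shift c k (fun j => b (S j)) + c * binom_shift c k b.
Proof.
  unfold binom_shift. rewrite decomp_sum by lia. simpl pred.
  rewrite C_n_0. rewrite Nat.sub_0_r.
  destruct k as [|k].
  - cbn [sum_f_R0]. replace (C 1 1) with 1 by (symmetry; apply C_n_n).
    replace (C 0 0) with 1 by (symmetry; apply C_n_0). simpl. ring.
  - rewrite tech5. rewrite C_n_n, Nat.sub_diag.
    rewrite (tech5 (fun j => C (S k) j * c ^ (S k - j) * b (S j))). rewrite C_n_n, Nat.sub_diag.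
    rewrite (decomp_sum (fun j => C (S k) j * c ^ (S k - j) * b j) (S k)) by lia. simpl pred.
    rewrite C_n_0, Nat.sub_0_r.
    rewrite (sum_eq (fun i => C (S (S k)) (S i) * c ^ (S (S k) - S i) * b (S i))
                    (fun i => C (S k) i * c ^ (S k - i) * b (S i) + C (S k) (S i) * c ^ (S k - i) * b (S i))).
    2:{ intros i Hi. rewrite <- pascal by lia. replace (S (S k) - S i)%nat with (S k - i)%nat by lia. ring. }
    rewrite plus_sum.
    rewrite Rmult_plus_distr_l. rewrite scal_sum.
    rewrite (sum_eq (fun i => C (S k) (S i) * c ^ (S k - S i) * b (S i) * c)
                    (fun i => C (S k) (S i) * c ^ (S k - i) * b (S i))).
    2:{ intros i Hi. replace (S k - i)%nat with (S (S k - S i)) by lia. simpl. ring. }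
    simpl. ring.
Qed.

Section Heat.
Variable N : nat.
Variable L : nat -> nat -> R.
Hypothesis HL : is_generator N L.

Lemma heat_row_sum t x : (x < N)%nat -> fsum N (heat N L t x) = 1.
Proof.
  intros Hx.
  assert (H1 : is_series (fun k => fsum N (fun y => heat_term N L t x y k)) (fsum N (heat N L t x))).
  { apply fsum_series. intros y Hy. apply heat_series; auto. }
  assert (H2 : is_series (fun k => fsum N (fun y => heat_term N L t x y k)) 1).
  { apply is_series_Reals. intros e He. exists 0%nat. intros n _.
    replace (sum_f_R0 (fun k => fsum N (fun y => heat_term N L t x y k)) n) with 1.
    { unfold R_dist. rewrite Rminus_diag, Rabs_R0. auto. }
    induction n as [|n IH].
    - simpl. unfold heat_term. simpl.
      rewrite (fsum_ext _ _ (fun y => matid x y * 1)) by (intros; field).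
      rewrite (fsum_matid_l N (fun _ => 1) x Hx). auto.
    - simpl. rewrite <- IH. unfold heat_term.
      rewrite fsum_scal_l. simpl. unfold matmul.
      rewrite fsum_swap.
      rewrite (fsum_ext _ _ (fun z => matpow N L n x z * 0)).
      + rewrite fsum_scal_r. ring.
      + intros z Hz. rewrite fsum_scal_l. f_equal. apply (HL z Hz). }
  apply (is_series_eq _ _ _ H1 H2).
Qed.

Lemma heat_semigroup s t x y : (x < N)%nat -> (y < N)%nat ->
  heat N L (s + t) x y = fsum N (fun z => heat N L s x z * heat N L t z y).
Proof.
  intros Hx Hy.
  assert (H1 : is_series
            (fun k => fsum N (fun z => sum_f_R0 (fun j => heat_term N L s x z j * heat_term N L t z y (k - j)) k))
                         (fsum N (fun z => heat N L s x z * heat N L t z y))).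
  { apply fsum_series. intros z Hz. apply is_series_mult.
    - apply heat_series; auto.
    - apply heat_series; auto.
    - apply heat_term_abs_summable; auto.
    - apply heat_term_abs_summable; auto. }
  apply (is_series_eq (heat_term N L (s + t) x y)); [apply heat_series; auto|].
  revert H1. apply is_series_ext. intros k.
  rewrite fsum_sum_f.
  rewrite (sum_eq _ (fun j => (s ^ j / INR (fact j) * (t ^ (k - j) / INR (fact (k - j)))) * matpow N L k x y)).
  2:{ intros j Hj. unfold heat_term.
      rewrite (fsum_ext _ _ (fun z => (s ^ j / INR (fact j) * (t ^ (k - j) / INR (fact (k - j)))) *
                                       (matpow N L j x z * matpow N L (k - j) z y))) by (intros; ring).
      rewrite fsum_scal_l. f_equal.
      replace (matpow N L k x y) with (matpow N L (j + (k - j)) x y) by (f_equal; lia).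
      rewrite matpow_add by auto. unfold matmul. auto. }
  rewrite <- (scal_sum (fun j => s ^ j / INR (fact j) * (t ^ (k - j) / INR (fact (k - j)))) k (matpow N L k x y)).
  rewrite exp_cauchy_coeff. unfold heat_term. apply Rmult_comm.
Qed.

Definition diag_shift := entry_abs_sum N L.
Definition shifted_gen x y := L x y + diag_shift * matid x y.

Lemma shifted_gen_ge0 x y : (x < N)%nat -> (y < N)%nat -> 0 <= shifted_gen x y.
Proof.
  intros Hx Hy. unfold shifted_gen, matid. destruct (Nat.eqb x y) eqn:E.
  - apply Nat.eqb_eq in E. subst. pose proof (abs_le_entry_abs_sum N L y y Hy Hy).
    unfold diag_shift. unfold Rabs in H. destruct (Rcase_abs (L y y)); lra.
  - apply Nat.eqb_neq in E. destruct (HL x Hx) as [H _]. specialize (H y Hy E). lra.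
Qed.

Lemma shifted_gen_pow_ge0 k : forall x y, (x < N)%nat -> (y < N)%nat -> 0 <= matpow N shifted_gen k x y.
Proof.
  induction k as [|k IH]; intros x y Hx Hy; simpl.
  - unfold matid. destruct (Nat.eqb x y); lra.
  - unfold matmul. apply fsum_nonneg. intros z Hz. apply Rmult_le_pos; [apply IH|apply shifted_gen_ge0]; auto.
Qed.

Lemma shifted_gen_pow_binomial k : forall x y, (x < N)%nat -> (y < N)%nat ->
  matpow N shifted_gen k x y = binom_shift diag_shift k (fun j => matpow N L j x y).
Proof.
  induction k as [|k IH]; intros x y Hx Hy.
  - unfold binom_shift. simpl. rewrite C_n_0. ring.
  - rewrite binom_shift_S. simpl matpow at 1. unfold matmul at 1. unfold shifted_gen at 2.
    rewrite (fsum_ext _ _ (fun z => matpow N shifted_gen k x z * L z y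
                                    + diag_shift * (matpow N shifted_gen k x z * matid z y))) by (intros; ring).
    rewrite fsum_plus, fsum_scal_l. rewrite (fsum_matid_r N (matpow N shifted_gen k x) y Hy).
    rewrite IH by auto. f_equal.
    rewrite (fsum_ext _ _ (fun z => binom_shift diag_shift k (fun j => matpow N L j x z) * L z y))
      by (intros; rewrite IH; auto).
    unfold binom_shift.
    rewrite (fsum_ext _ _ (fun z => sum_f_R0 (fun j => C k j * diag_shift ^ (k - j) * (matpow N L j x z * L z y)) k)).
    2:{ intros z Hz. rewrite Rmult_comm, scal_sum. apply sum_eq. intros; ring. }
    rewrite fsum_sum_f. apply sum_eq. intros j Hj. rewrite fsum_scal_l. simpl. unfold matmul. auto.
Qed.

Lemma diag_shift_ge0 : 0 <= diag_shift.
Proof. apply entry_abs_sum_ge0. Qed.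

(* [e^(c t) H_t] is the Cauchy product of the exponential series of [c t] and of [t L], i.e. the
   series of [e^(t (L + c I))], whose terms are nonnegative once [c] dominates the diagonal of [L]. *)
Lemma heat_nonneg t x y : 0 <= t -> (x < N)%nat -> (y < N)%nat -> 0 <= heat N L t x y.
Proof.
  intros Ht Hx Hy.
  set (b := fun i => (diag_shift * t) ^ i / INR (fact i)).
  assert (Hb0 : forall i, 0 <= b i).
  { intros i. unfold b. apply Rmult_le_pos; [apply pow_le; pose proof diag_shift_ge0; nra|].
    left. apply Rinv_0_lt_compat, INR_fact_lt_0. }
  assert (Hbs : is_series b (exp (diag_shift * t))) by apply exp_series.
  assert (Hbabs : ex_series (fun i => Rabs (b i))).
  { exists (exp (diag_shift * t)). apply (is_series_ext b); auto.
    intros i. rewrite Rabs_right; auto. apply Rle_ge; auto. }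
  pose proof (is_series_mult _ _ _ _ (heat_series N L t x y Hy) Hbs
                (heat_term_abs_summable N L t x y Hy) Hbabs) as HM.
  assert (Hpos : 0 <= heat N L t x y * exp (diag_shift * t)).
  { apply (is_series_nonneg _ _ HM). intros k.
    rewrite (sum_eq _ (fun j => (C k j * diag_shift ^ (k - j) * matpow N L j x y) * (t ^ k / INR (fact k)))).
    - rewrite <- scal_sum. fold (binom_shift diag_shift k (fun j => matpow N L j x y)).
      rewrite <- shifted_gen_pow_binomial by auto. rewrite Rmult_comm. apply Rmult_le_pos.
      + apply shifted_gen_pow_ge0; auto.
      + apply Rmult_le_pos; [apply pow_le; auto|]. left. apply Rinv_0_lt_compat, INR_fact_lt_0.
    - intros j Hj. unfold heat_term, b, C.
      replace (t ^ k) with (t ^ j * t ^ (k - j)) by (rewrite <- pow_add; f_equal; lia).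
      rewrite Rpow_mult_distr.
      field. split; [apply INR_fact_neq_0|]. split; apply INR_fact_neq_0. }
  pose proof (exp_pos (diag_shift * t)).
  apply (Rmult_le_reg_r (exp (diag_shift * t))); auto. lra.
Qed.
Variable pi : nat -> R.
Hypothesis Hrev : reversible N L pi.

Lemma matpow_reversible k : forall x y, (x < N)%nat -> (y < N)%nat ->
  pi x * matpow N L k x y = pi y * matpow N L k y x.
Proof.
  induction k as [|k IH]; intros x y Hx Hy.
  - simpl. unfold matid. rewrite Nat.eqb_sym. destruct (Nat.eqb y x) eqn:E.
    + apply Nat.eqb_eq in E. subst. auto.
    + ring.
  - rewrite (matpow_S_l N L k y x) by auto. simpl. unfold matmul.
    rewrite <- !fsum_scal_l. apply fsum_ext. intros z Hz.
    replace (pi x * (matpow N L k x z * L z y)) with ((pi x * matpow N L k x z) * L z y) by ring.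
    rewrite IH by auto. replace (pi z * matpow N L k z x * L z y) with ((pi z * L z y) * matpow N L k z x) by ring.
    rewrite (Hrev z y) by auto. ring.
Qed.

Lemma heat_reversible t x y : (x < N)%nat -> (y < N)%nat -> pi x * heat N L t x y = pi y * heat N L t y x.
Proof.
  intros Hx Hy.
  rewrite <- (is_series_unique _ _ (heat_series N L t x y Hy)),
    <- (is_series_unique _ _ (heat_series N L t y x Hx)), <- !Series_scal_l.
  apply Series_ext. intros k. unfold heat_term.
  replace (pi y * (t ^ k / INR (fact k) * matpow N L k y x))
    with (t ^ k / INR (fact k) * (pi y * matpow N L k y x)) by ring.
  rewrite <- (matpow_reversible k x y) by auto. ring.
Qed.

End Heat.

Lemma d2_cont_step N L pi mu t0 h :
  is_generator N L -> irreducible N L -> stationary_generator N L pi -> reversible N L pi ->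
  0 < h ->
  d2_cont N L pi mu (t0 + h) <= d2_cont N L pi mu t0 /\
  d2_cont N L pi mu (t0 + h) ^ 2 <= d2_cont N L pi mu t0 * d2_cont N L pi mu (t0 + 2 * h).
Proof.
  intros HL Hirr [Hprob _] Hrev Hh.
  pose proof (pi_pos_of_irreducible N L pi Hirr Hrev Hprob) as Hpi.
  set (P := heat N L h).
  assert (HP0 : forall x y, (x < N)%nat -> (y < N)%nat -> 0 <= P x y).
  { intros x y Hx Hy. apply heat_nonneg; auto; lra. }
  assert (HP1 : forall x, (x < N)%nat -> fsum N (P x) = 1) by (intros; apply heat_row_sum; auto).
  assert (HPr : forall x y, (x < N)%nat -> (y < N)%nat -> pi x * P x y = pi y * P y x)
    by (intros; apply heat_reversible; auto).
  set (nu := fun m => vecmat N mu (heat N L (t0 + INR m * h))).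
  assert (Hnu : forall m y, (y < N)%nat -> nu (S m) y = vecmat N (nu m) P y).
  { intros m y Hy. unfold nu, vecmat, P.
    rewrite (fsum_ext _ _ (fun x => fsum N (fun z => mu x * heat N L (t0 + INR m * h) x z * heat N L h z y))).
    - rewrite fsum_swap. apply fsum_ext. intros z Hz. rewrite <- fsum_scal_r. auto.
    - intros x Hx. replace (t0 + INR (S m) * h) with ((t0 + INR m * h) + h) by (rewrite S_INR; ring).
      rewrite heat_semigroup by auto. rewrite <- fsum_scal_l. apply fsum_ext. intros; ring. }
  pose proof (dist_nonincr N P pi Hpi HP0 HP1 HPr nu Hnu 0) as H1.
  pose proof (dist_logconvex N P pi Hpi HP1 HPr nu Hnu 0) as H2.
  unfold dist, nu in H1, H2. simpl INR in H1, H2.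
  replace (t0 + 0 * h) with t0 in H1, H2 by ring.
  replace (t0 + 1 * h) with (t0 + h) in H1, H2 by ring.
  replace (t0 + (1 + 1) * h) with (t0 + 2 * h) in H2 by ring.
  unfold d2_cont. auto.
Qed.

Lemma d2_cont_logconvex N L pi mu :
  is_generator N L -> irreducible N L -> stationary_generator N L pi -> reversible N L pi ->
  (forall t, 0 <= d2_cont N L pi mu t) /\
  (forall s t, 0 <= s <= t -> d2_cont N L pi mu t <= d2_cont N L pi mu s) /\
  (forall t h, 0 <= t -> 0 < h ->
     d2_cont N L pi mu (t + h) ^ 2 <= d2_cont N L pi mu t * d2_cont N L pi mu (t + 2 * h)).
Proof.
  intros HL Hirr Hst Hrev. split; [|split].
  - intros t. unfold d2_cont, l2dist. apply sqrt_pos.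
  - intros s t Hst'. destruct (Req_dec s t) as [->|Hne]; [lra|].
    replace t with (s + (t - s)) by ring.
    apply (d2_cont_step N L pi mu s (t - s)); auto. lra.
  - intros t h Ht Hh. apply (d2_cont_step N L pi mu t h); auto.
Qed.

Theorem theorem3p1 :
  (* (1) continuous time *)
  (forall (N : nat -> nat) (L : nat -> nat -> nat -> R) (pi mu : nat -> nat -> R),
     (forall n, is_generator (N n) (L n)) ->
     (forall n, irreducible (N n) (L n)) ->
     (forall n, stationary_generator (N n) (L n) (pi n)) ->
     (forall n, reversible (N n) (L n) (pi n)) ->
     (forall n, is_prob (N n) (mu n)) ->
     liminf_gt (fun n => l2norm2 (N n) (mu n) (pi n)) 1 ->
     (cutoff_cont (fun n => d2_cont (N n) (L n) (pi n) (mu n)) <->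
      precutoff_cont (fun n => d2_cont (N n) (L n) (pi n) (mu n))))
  /\
  (* (2) discrete time *)
  (forall (N : nat -> nat) (K : nat -> nat -> nat -> R) (pi mu : nat -> nat -> R),
     (forall n, is_kernel (N n) (K n)) ->
     (forall n, irreducible (N n) (K n)) ->
     (forall n, stationary_kernel (N n) (K n) (pi n)) ->
     (forall n, reversible (N n) (K n) (pi n)) ->
     (forall n, is_prob (N n) (mu n)) ->
     liminf_gt (fun n => l2norm2 (N n) (vecmat (N n) (mu n) (K n)) (pi n)) 1 ->
     (exists eps0, 0 < eps0 /\
        T2_disc_to_infty (fun n => d2_disc (N n) (K n) (pi n) (mu n)) eps0) ->
     (cutoff_disc (fun n => d2_disc (N n) (K n) (pi n) (mu n)) <->
      precutoff_disc (fun n => d2_disc (N n) (K n) (pi n) (mu n)))).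
Proof.
  split.
  - intros N L pi mu HL Hirr Hst Hrev _ _.
    apply logconvex_cutoff_iff_precutoff_cont; intros n;
      destruct (d2_cont_logconvex (N n) (L n) (pi n) (mu n)) as (? & ? & ?); auto.
  - intros N K pi mu HK Hirr Hst Hrev _ _ [eps0 [He0 HT2]].
    refine (logconvex_cutoff_iff_precutoff_disc _ _ _ _ eps0 He0 HT2); intros n;
      destruct (d2_disc_logconvex (N n) (K n) (pi n) (mu n)) as (? & ? & ?); auto.
Qed.
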